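(* Let $R$ be a valuation domain of cardinality $\aleph_1$ with quotient field $Q$, where $Q$ is not countably generated as an $R$-module. If the type $Q/R$ is essentially countable, then it is strongly countable.
   Context: A valuation domain is an integral domain whose ideals are linearly ordered by inclusion. For an $R$-submodule $J$ of $Q$ with $R\subseteq J$, not countably generated, write $J=\bigcup_{\sigma<\omega_1} r_\sigma^{-1}R$ with nonzero $r_\sigma\in R$ such that for $\tau<\sigma$, $r_\tau\mid r_\sigma$ and $r_\sigma\nmid r_\tau$. The type $J/R$ is essentially uncountable if for every $\sigma<\omega_1$ there is $\tau>\sigma$ with $r_\sigma R/r_\tau R$ uncountable; otherwise it is essentially countable (equivalently, there is $\gamma<\omega_1$ with $r_\gamma R/r_\sigma R$ countable for all $\gamma<\sigma<\omega_1$). It is strongly countable if $R/r_\sigma R$ is countable for all $\sigma<\omega_1$. These notions are independent of the choice of the $r_\sigma$. *)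

From HB Require Import structures.
From mathcomp Require Import all_boot all_order all_algebra fraction.
From mathcomp Require Import boolp classical_sets cardinality.
Set Implicit Arguments. Unset Strict Implicit. Unset Printing Implicit Defensive.
Import Order.TTheory GRing.Theory.
Local Open Scope classical_set_scope.
Local Open Scope ring_scope.

Section Defs.
Variable R : idomainType.
Local Notation "x %:F" := (@FracField.tofrac R x).

Definition is_ideal (I : set R) : Prop :=
  [/\ I 0, (forall x y, I x -> I y -> I (x + y)) & (forall r x, I x -> I (r * x))].

Definition valuation_domain : Prop :=
  forall I J : set R, is_ideal I -> is_ideal J -> I `<=` J \/ J `<=` I.

Definition rdvd (a b : R) : Prop := exists c : R, b = a * c.

Definition principal (a : R) : set R := [set a * x | x in [set: R]].

(* the module aR / bR (b R contained in a R), as the set of cosets x + bR, x in aR *)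
Definition quot_cosets (a b : R) : set (set R) :=
  [set [set x + y | y in principal b] | x in principal a].

Definition quot_cosets_R (b : R) : set (set R) :=
  [set [set x + y | y in principal b] | x in [set: R]].

Definition inv_principal (r : R) : set {fraction R} :=
  [set (x%:F) / (r%:F) | x in [set: R]].

Definition R_span (G : set {fraction R}) : set {fraction R} :=
  [set q | exists (n : nat) (c : 'I_n -> R) (g : 'I_n -> {fraction R}),
      (forall i, G (g i)) /\ q = \sum_(i < n) (c i)%:F * g i].

Definition Q_countably_generated : Prop :=
  exists G : set {fraction R}, countable G /\ R_span G = [set: {fraction R}].
End Defs.

(* (T, lt) is (order-isomorphic to) the first uncountable ordinal omega_1:
   a strict well-order which is uncountable, all of whose proper initial
   segments are countable. *)
Definition omega1 (T : Type) (lt : T -> T -> Prop) : Prop :=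
  [/\ (forall x, ~ lt x x),
      (forall x y z, lt x y -> lt y z -> lt x z),
      (forall x y, lt x y \/ x = y \/ lt y x),
      well_founded lt &
      (~ countable [set: T] /\ forall t, countable [set s | lt s t])].

Definition card_aleph1 (A : Type) : Prop :=
  exists (T : Type) (lt : T -> T -> Prop), omega1 lt /\ ([set: T] #= [set: A])%card.

Section Types.
Variables (R : idomainType) (T : Type) (lt : T -> T -> Prop) (r : T -> R).

Definition omega1_repr_Q : Prop :=
  [/\ omega1 lt,
      (forall s, r s != 0),
      (forall t s, lt t s -> rdvd (r t) (r s) /\ ~ rdvd (r s) (r t)) &
      [set: {fraction R}] = \bigcup_(s in [set: T]) inv_principal (r s)].

Definition ess_uncountable : Prop :=
  forall s, exists t, lt s t /\ ~ countable (quot_cosets (r s) (r t)).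

Definition ess_countable : Prop := ~ ess_uncountable.

Definition strongly_countable : Prop :=
  forall s, countable (quot_cosets_R (r s)).
End Types.

From HB Require Import structures.
From mathcomp Require Import all_boot all_order all_algebra fraction.
From mathcomp Require Import boolp classical_sets cardinality.
Set Implicit Arguments. Unset Strict Implicit. Unset Printing Implicit Defensive.
Import Order.TTheory GRing.Theory.
Local Open Scope classical_set_scope.
Local Open Scope ring_scope.

(* Essential countability yields one index g with r_g R / r_t R countable for
   every t (for t <= g the quotient is trivial).  Given t, write 1/(r_g r_t) as
   x / r_s; then r_s = r_g r_t x, and R / r_t R is the image of the countable
   r_g R / r_s R under "divide by r_g, then reduce mod r_t". *)

Section Cosets.
Variable R : idomainType.

Lemma quot_cosets_trivial (a b : R) : rdvd b a ->
  quot_cosets a b `<=` [set principal b].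
Proof.
move=> [d ->] C [x [u _ <-] <-] /=.
apply/seteqP; split => z /=.
- by move=> [y [v _ <-] <-]; exists (d * u + v) => //; rewrite mulrDr mulrA.
- move=> [w _ <-]; exists (b * w - b * d * u); last by rewrite addrC subrK.
  by exists (w - d * u) => //; rewrite mulrBr mulrA.
Qed.

Lemma countable_quot_cosets_dvd (a b : R) : rdvd b a ->
  countable (quot_cosets a b).
Proof.
move=> ba; apply: sub_countable (countable1 (principal b)).
exact/subset_card_le/quot_cosets_trivial.
Qed.

Definition descend_coset (g t : R) (C : set R) : set R :=
  [set z | exists a, C (g * a) /\ rdvd t (z - a)].

Lemma quot_cosets_R_descend (g t c : R) : g != 0 ->
  quot_cosets_R t `<=` descend_coset g t @` quot_cosets g (g * (t * c)).
Proof.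
move=> g0 C [a0 _ <-].
exists [set g * a0 + y | y in principal (g * (t * c))].
  by exists (g * a0) => //; exists a0.
apply/seteqP; split => z /=.
- move=> [a [[y [w _ <-] Hga] [e He]]].
  have Ha : a = a0 + t * (c * w).
    by apply: (mulfI g0); rewrite -Hga mulrDr !mulrA.
  exists (t * (c * w + e)); first by exists (c * w + e).
  by rewrite mulrDr addrA -Ha -He addrC subrK.
- move=> [y [v _ <-] <-]; exists a0; split.
    by exists 0; [exists 0; rewrite ?mulr0 | rewrite addr0].
  by exists v; rewrite addrC addKr.
Qed.

Lemma countable_quot_cosets_R (g t c : R) : g != 0 ->
  countable (quot_cosets g (g * (t * c))) -> countable (quot_cosets_R t).
Proof.
move=> g0 cnt; apply: sub_countable cnt.
apply: (card_le_trans (B := descend_coset g t @` quot_cosets g (g * (t * c)))).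
  exact/subset_card_le/quot_cosets_R_descend.
exact: card_image_le.
Qed.

End Cosets.

Section Omega1Representation.
Variables (R : idomainType) (T : Type) (lt : T -> T -> Prop) (r : T -> R).
Hypothesis repr : omega1_repr_Q lt r.
Local Notation "x %:F" := (@FracField.tofrac R x).

Lemma omega1_repr_Q_mul (a : R) : a != 0 -> exists s x, r s = a * x.
Proof.
case: repr => _ rnz _ Qeq a0.
have : [set: {fraction R}] (a%:F)^-1 by [].
rewrite Qeq => -[s _ [x _ xE]]; exists s, x.
have Fs : (r s)%:F != 0 by rewrite tofrac_eq0.
have Fa : a%:F != 0 by rewrite tofrac_eq0.
apply/eqP; rewrite -tofrac_eq tofracM; apply/eqP.
by rewrite -(divfK Fs x%:F) xE mulrA mulfV ?mul1r.
Qed.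

Lemma ess_countable_uniform : ess_countable lt r ->
  exists g, forall t, countable (quot_cosets (r g) (r t)).
Proof.
case: repr => -[_ _ tri _ _] _ rdiv _ ess.
apply: contrapT => nounif; apply: ess => s.
apply: contrapT => small; apply: nounif; exists s => t.
case: (tri s t) => [st|[<-|ts]].
- by apply: contrapT => unc; apply: small; exists t.
- by apply: countable_quot_cosets_dvd; exists 1; rewrite mulr1.
- exact/countable_quot_cosets_dvd/(rdiv _ _ ts).1.
Qed.

End Omega1Representation.

Theorem mainTheorem3 (R : idomainType) (T : Type) (lt : T -> T -> Prop)
    (r : T -> R) :
  valuation_domain R ->
  card_aleph1 R ->
  ~ Q_countably_generated R ->
  omega1_repr_Q lt r ->
  ess_countable lt r ->
  strongly_countable r.
Proof.
move=> _ _ _ repr /(ess_countable_uniform repr) [g cnt] t.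
have [_ rnz _ _] := repr.
have [s [x rsE]] := omega1_repr_Q_mul repr (mulf_neq0 (rnz g) (rnz t)).
apply: (countable_quot_cosets_R (g := r g) (c := x)) => //.
by rewrite mulrA -rsE.
Qed.
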